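(* Suppose $\{\varphi_i\}_{i=1}^N$ is a set of linearly independent unit vectors in $\mathbb{R}^N$ such that the hyperplanes $\{\varphi_i^\perp\}_{i=1}^N$ do norm retrieval in $\mathbb{R}^N$. If $x,y\in\mathbb{R}^N$ satisfy $\langle x,\varphi_i\rangle=\pm1$ and $\langle y,\varphi_i\rangle=\pm1$ for all $i\in\{1,\dots,N\}$ (with signs allowed to depend on $i$ and to differ between $x$ and $y$), then $\|x\|=\|y\|$.
   Context: For a nonzero vector $\varphi\in\mathbb{R}^N$, $\varphi^\perp=\{x\in\mathbb{R}^N:\langle x,\varphi\rangle=0\}$. A family of subspaces $\{W_i\}_{i=1}^M$ of $\mathbb{R}^N$ with orthogonal projections $\{P_i\}_{i=1}^M$ does norm retrieval if for all $x,y\in\mathbb{R}^N$, $\|P_ix\|=\|P_iy\|$ for all $i$ implies $\|x\|=\|y\|$. *)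

From mathcomp Require Import all_boot all_order all_algebra.
From mathcomp Require Import reals.
Set Implicit Arguments. Unset Strict Implicit. Unset Printing Implicit Defensive.
Import Order.TTheory GRing.Theory Num.Theory.
Local Open Scope ring_scope.

Definition dotv (R : realType) (N : nat) (x y : 'rV[R]_N) : R :=
  \sum_(j < N) x 0 j * y 0 j.

Definition normv (R : realType) (N : nat) (x : 'rV[R]_N) : R :=
  Num.sqrt (dotv x x).

Definition proj_perp (R : realType) (N : nat) (phi x : 'rV[R]_N) : 'rV[R]_N :=
  x - (dotv x phi / dotv phi phi) *: phi.

Definition hyperplanes_norm_retrieval (R : realType) (N M : nat)
  (phi : 'I_M -> 'rV[R]_N) : Prop :=
  forall x y : 'rV[R]_N,
    (forall i, normv (proj_perp (phi i) x) = normv (proj_perp (phi i) y)) ->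
    normv x = normv y.

Definition lin_indep (R : realType) (N M : nat) (phi : 'I_M -> 'rV[R]_N) : bool :=
  row_free (\matrix_(i < M) phi i).

(** Write a = |x|^2 and b = |y|^2; for N > 0 both are at least 1 since each <x, phi_i>^2 = 1.
   Since |P_i z|^2 = |z|^2 - <z, phi_i>^2, every projection of x has squared norm
   a - 1, and every projection of l y has squared norm l^2 (b - 1).  If b > 1,
   choose l with l^2 (b - 1) = a - 1: norm retrieval then gives a = l^2 b, and the
   two equations force l^2 = 1, i.e. a = b. *)
From mathcomp Require Import all_boot all_order all_algebra.
From mathcomp Require Import reals.
From mathcomp Require Import ring lra.
Import Order.TTheory GRing.Theory Num.Theory.
Local Open Scope ring_scope.

Section DotProduct.
Variables (R : realType) (N : nat).
Implicit Types (u v w : 'rV[R]_N) (c : R).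

Lemma dotvC u v : dotv u v = dotv v u.
Proof. by apply: eq_bigr => j _; rewrite mulrC. Qed.

Lemma dotvBl u v w : dotv (u - v) w = dotv u w - dotv v w.
Proof.
by rewrite /dotv -sumrB; apply: eq_bigr => j _; rewrite !mxE mulrBl.
Qed.

Lemma dotvBr u v w : dotv u (v - w) = dotv u v - dotv u w.
Proof. by rewrite dotvC dotvBl !(dotvC u). Qed.

Lemma dotvZl c u w : dotv (c *: u) w = c * dotv u w.
Proof. by rewrite /dotv mulr_sumr; apply: eq_bigr => j _; rewrite mxE mulrA. Qed.

Lemma dotvZr c u w : dotv u (c *: w) = c * dotv u w.
Proof. by rewrite dotvC dotvZl dotvC. Qed.

Lemma dotvvZ c u : dotv (c *: u) (c *: u) = c ^+ 2 * dotv u u.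
Proof. by rewrite dotvZl dotvZr mulrA -expr2. Qed.

Lemma dotvv_ge0 u : 0 <= dotv u u.
Proof. by apply: sumr_ge0 => j _; rewrite -expr2 sqr_ge0. Qed.

Lemma eq_normv_dotvv u v : normv u = normv v <-> dotv u u = dotv v v.
Proof.
rewrite /normv; split=> [/eqP|->] //.
by rewrite eqr_sqrt ?dotvv_ge0 // => /eqP.
Qed.

Lemma dotvv_normv1 u : normv u = 1 -> dotv u u = 1.
Proof. by move=> u1; rewrite -[LHS]sqr_sqrtr ?dotvv_ge0 // -/(normv u) u1 expr1n. Qed.

(* No hypothesis on [phi]: if [dotv phi phi = 0], both divisions return 0. *)
Lemma dotv_proj_perp phi u :
  dotv (proj_perp phi u) (proj_perp phi u) =
  dotv u u - dotv u phi ^+ 2 / dotv phi phi.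
Proof.
rewrite /proj_perp dotvBl !dotvBr !dotvZl !dotvZr (dotvC phi u).
have [->|phi_nz] := eqVneq (dotv phi phi) 0; first by rewrite !invr0 !mulr0; ring.
by field.
Qed.

Lemma sqr_dotv_le phi u : dotv u phi ^+ 2 / dotv phi phi <= dotv u u.
Proof. by rewrite -subr_ge0 -dotv_proj_perp dotvv_ge0. Qed.

End DotProduct.

Section UnitHyperplanes.
Variables (R : realType) (N : nat) (phi : 'I_N -> 'rV[R]_N).
Hypothesis phi_unit : forall i, dotv (phi i) (phi i) = 1.
Hypothesis phi_nr : hyperplanes_norm_retrieval phi.

Lemma dotv_proj_perp_unit i u :
  dotv (proj_perp (phi i) u) (proj_perp (phi i) u) = dotv u u - dotv u (phi i) ^+ 2.
Proof. by rewrite dotv_proj_perp phi_unit divr1. Qed.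

Lemma sqr_dotv_unit_le i u : dotv u (phi i) ^+ 2 <= dotv u u.
Proof. by rewrite -[leLHS]divr1 -(phi_unit i) sqr_dotv_le. Qed.

Variables x y : 'rV[R]_N.
Hypothesis x_pm1 : forall i, dotv x (phi i) ^+ 2 = 1.
Hypothesis y_pm1 : forall i, dotv y (phi i) ^+ 2 = 1.

Lemma dotvv_eq_scale l :
  l ^+ 2 * (dotv y y - 1) = dotv x x - 1 -> dotv x x = l ^+ 2 * dotv y y.
Proof.
move=> scale_l; rewrite -dotvvZ; apply/eq_normv_dotvv/phi_nr => i.
apply/eq_normv_dotvv; rewrite !dotv_proj_perp_unit dotvvZ dotvZl exprMn.
by rewrite x_pm1 y_pm1 -scale_l; ring.
Qed.

Lemma dotvv_eq_of_gt1 : 1 <= dotv x x -> 1 < dotv y y -> dotv x x = dotv y y.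
Proof.
set a := dotv x x; set b := dotv y y => a_ge1 b_gt1.
have b1_nz : b - 1 != 0 by rewrite subr_eq0 gt_eqF.
set l := Num.sqrt ((a - 1) / (b - 1)).
have l2 : l ^+ 2 = (a - 1) / (b - 1).
  by rewrite sqr_sqrtr // divr_ge0 // subr_ge0 // ltW.
have a_eq : a = l ^+ 2 * b by apply: dotvv_eq_scale; rewrite l2 divfK.
have : a * (b - 1) = (a - 1) * b by rewrite {1}a_eq l2 mulrAC divfK.
lra.
Qed.

End UnitHyperplanes.

Lemma dotv_ord0 (R : realType) (u v : 'rV[R]_0) : dotv u v = 0.
Proof. exact: big_ord0. Qed.

Theorem mainTheorem4 (R : realType) (N : nat) (phi : 'I_N -> 'rV[R]_N) :
  lin_indep phi ->
  (forall i, normv (phi i) = 1) ->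
  hyperplanes_norm_retrieval phi ->
  forall x y : 'rV[R]_N,
    (forall i, dotv x (phi i) = 1 \/ dotv x (phi i) = -1) ->
    (forall i, dotv y (phi i) = 1 \/ dotv y (phi i) = -1) ->
    normv x = normv y.
Proof.
move=> _ phi_n1 phi_nr x y x_pm1 y_pm1; apply/eq_normv_dotvv.
have {phi_n1} phi_unit i : dotv (phi i) (phi i) = 1 by exact: dotvv_normv1.
have sqr_pm1 z : (forall i, dotv z (phi i) = 1 \/ dotv z (phi i) = -1) ->
    forall i, dotv z (phi i) ^+ 2 = 1.
  by move=> z_pm1 i; apply/eqP; rewrite sqrf_eq1; case: (z_pm1 i) => ->; rewrite eqxx ?orbT.
move: x_pm1 y_pm1 => /sqr_pm1 x_pm1 /sqr_pm1 y_pm1 {sqr_pm1}.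
case: N => [|n] in phi phi_nr x y x_pm1 y_pm1 phi_unit *.
  by rewrite !dotv_ord0.
have ge1 z : (forall i, dotv z (phi i) ^+ 2 = 1) -> 1 <= dotv z z.
  by move=> z_pm1; rewrite -(z_pm1 ord0); exact: sqr_dotv_unit_le.
have [x_ge1 y_ge1] := (ge1 x x_pm1, ge1 y y_pm1).
have [y_gt1|y_le1] := ltrP 1 (dotv y y); first exact: dotvv_eq_of_gt1.
have [x_gt1|x_le1] := ltrP 1 (dotv x x); first by symmetry; exact: dotvv_eq_of_gt1.
lra.
Qed.
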